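(* With $A,B,C$ as defined, set $\Sigma=B+C$. The map sending the conjugacy class of $f\in\mathrm{Rat}_2$ to $(A,\Sigma)$ (computed from either critical marking of $f$) is a well-defined bijection from $\mathcal M_2$ onto $\mathbf C^2$.
   Context: $\mathrm{Rat}_2$ is the space of holomorphic degree-$2$ maps of the Riemann sphere; $\mathcal M_2$ is the set of its Möbius conjugacy classes. Every $f\in\mathrm{Rat}_2$, together with an ordering $(\omega_1,\omega_2)$ of its two critical points, is Möbius conjugate (sending $\omega_1\mapsto0$, $\omega_2\mapsto\infty$) to a map $z\mapsto(\alpha z^2+\beta)/(\gamma z^2+\delta)$ with $\alpha\delta-\beta\gamma=1$, unique up to $(\alpha,\beta,\gamma,\delta)\mapsto(\alpha\lambda,\beta\lambda^{-3},\gamma\lambda^3,\delta\lambda^{-1})$, $\lambda\in\mathbf C\setminus\{0\}$; set $A=\alpha\delta$, $B=\alpha^3\beta$, $C=\gamma\delta^3$. Reversing the ordering of the critical points replaces $(A,B,C)$ by $(A,C,B)$. *)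

From HB Require Import structures.
From mathcomp Require Import all_boot all_order all_algebra.
From mathcomp Require Import complex.
Set Implicit Arguments. Unset Strict Implicit. Unset Printing Implicit Defensive.
Import GRing.Theory.
Local Open Scope ring_scope.

(* The Riemann sphere over a field F: [Some z] is the finite point z,
   [None] is the point at infinity. *)
Definition sphere (F : fieldType) := option F.

Section Sphere.
Variable F : fieldType.

Definition homog (p : sphere F) : F * F :=
  match p with Some z => (z, 1) | None => (1, 0) end.

(* the point [x : y] of the sphere (for (x,y) <> (0,0)) *)
Definition proj (x y : F) : sphere F := if y == 0 then None else Some (x / y).

Definition ratmap2 (a0 a1 a2 b0 b1 b2 : F) (p : sphere F) : sphere F :=
  let: (x, y) := homog p in
  proj (a2 * x ^+ 2 + a1 * x * y + a0 * y ^+ 2)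
       (b2 * x ^+ 2 + b1 * x * y + b0 * y ^+ 2).

(* Rat_2: holomorphic degree-2 self-maps of the sphere, i.e. maps given by
   two binary quadratic forms without a common zero on P^1. *)
Definition Rat2 (f : sphere F -> sphere F) : Prop :=
  exists a0 a1 a2 b0 b1 b2 : F,
    (forall x y : F, (x, y) <> (0, 0) ->
       ~ (a2 * x ^+ 2 + a1 * x * y + a0 * y ^+ 2 = 0 /\
          b2 * x ^+ 2 + b1 * x * y + b0 * y ^+ 2 = 0)) /\
    forall p, f p = ratmap2 a0 a1 a2 b0 b1 b2 p.

Definition mobius (p q r s : F) (z : sphere F) : sphere F :=
  let: (x, y) := homog z in proj (p * x + q * y) (r * x + s * y).

Definition mob_conj (f g : sphere F -> sphere F) : Prop :=
  exists p q r s : F, p * s - q * r != 0 /\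
    forall z, mobius p q r s (f z) = g (mobius p q r s z).

Definition normal_form (al be ga de : F) : sphere F -> sphere F :=
  ratmap2 be 0 al de 0 ga.

(* (a, s) = (A, Sigma) = (A, B + C) computed from some (either) critical
   marking of f, i.e. from some normalisation of f. *)
Definition ASigma_of (f : sphere F -> sphere F) (a s : F) : Prop :=
  exists al be ga de : F,
    al * de - be * ga = 1 /\ mob_conj f (normal_form al be ga de) /\
    a = al * de /\ s = al ^+ 3 * be + ga * de ^+ 3.

End Sphere.

From HB Require Import structures.
From mathcomp Require Import all_boot all_order all_algebra.
From mathcomp Require Import complex ring.
Import GRing.Theory Num.Theory.
Set Implicit Arguments. Unset Strict Implicit.
Local Open Scope ring_scope.

(* A quadratic rational map has two critical points, the zeros of the
   Jacobian form of (P, Q); moving them to 0 and oo and rescaling gives the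
   normal form (al z^2 + be) / (ga z^2 + de) with al de - be ga = 1.
   A conjugacy between normal forms preserves {0, oo}, hence is diagonal or
   antidiagonal: diagonal ones preserve A, B and C, and z |-> 1/z exchanges
   B and C, so A and B + C are invariants.  Conversely B C = A^3 (A - 1), so
   (A, B + C) determines {B, C}, and normal forms with the same (A, B, C)
   differ by a diagonal rescaling.  Every (A, Sigma) is attained by solving
   this quadratic for B and C. *)

Section LinearCombination.
Variable R : comPzRingType.

Lemma eq_lincomb1 (A B L1 R1 k1 : R) :
  L1 = R1 -> A - B = k1 * (L1 - R1) -> A = B.
Proof. by move=> -> e; apply/eqP; rewrite -subr_eq0 e subrr mulr0. Qed.

Lemma eq_lincomb3 (A B L1 R1 L2 R2 L3 R3 k1 k2 k3 : R) :
  L1 = R1 -> L2 = R2 -> L3 = R3 ->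
  A - B = k1 * (L1 - R1) + k2 * (L2 - R2) + k3 * (L3 - R3) -> A = B.
Proof.
by move=> -> -> -> e; apply/eqP; rewrite -subr_eq0 e !subrr !mulr0 !addr0.
Qed.

End LinearCombination.

Section ProjectiveLine.
Variable F : fieldType.
Implicit Types (x y p q r s : F) (z : sphere F) (f g h : sphere F -> sphere F).

Definition nonzero2 x y := (x != 0) || (y != 0).

Lemma nonzero2P x y : reflect (~ (x = 0 /\ y = 0)) (nonzero2 x y).
Proof.
apply: (iffP orP) => [[] /eqP nz [x0 y0] // | nz].
by case: (eqVneq x 0) => [x0|]; [right; apply/eqP => y0; apply: nz | left].
Qed.

Lemma nonzero2_pair x y : (x, y) <> (0, 0) -> nonzero2 x y.
Proof. by move=> nz; apply/nonzero2P => -[x0 y0]; apply: nz; rewrite x0 y0. Qed.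

Lemma nonzero2_10 : nonzero2 1 0. Proof. by rewrite /nonzero2 oner_eq0. Qed.
Lemma nonzero2_01 : nonzero2 0 1. Proof. by rewrite /nonzero2 oner_eq0 orbT. Qed.
Lemma nonzero2_11 : nonzero2 1 1. Proof. by rewrite /nonzero2 oner_eq0. Qed.

Lemma proj_scale (c x y : F) : c != 0 -> proj (c * x) (c * y) = proj x y.
Proof.
move=> c0; rewrite /proj mulf_eq0 (negbTE c0) /=.
by case: ifP => // y0; congr Some; field; rewrite c0 y0.
Qed.

Lemma homogK z : proj (homog z).1 (homog z).2 = z.
Proof. by case: z => [z|]; rewrite /proj /= ?eqxx // oner_eq0 divr1. Qed.

Lemma homog_nonzero2 z : nonzero2 (homog z).1 (homog z).2.
Proof. by case: z => [z|]; rewrite /nonzero2 /= oner_eq0 ?orbT. Qed.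

Lemma sphere_proj_ind (P : sphere F -> Prop) :
  (forall x y, nonzero2 x y -> P (proj x y)) -> forall z, P z.
Proof. by move=> Pproj z; rewrite -(homogK z); apply/Pproj/homog_nonzero2. Qed.

Lemma proj01 : proj 0 1 = Some (0 : F).
Proof. by rewrite /proj oner_eq0 mul0r. Qed.

Lemma proj10 : proj 1 0 = None :> sphere F.
Proof. by rewrite /proj eqxx. Qed.

Lemma proj_eq0 x y : proj x y = Some 0 -> x = 0 /\ y != 0.
Proof.
rewrite /proj; case: (eqVneq y 0) => // y0 [/eqP].
by rewrite mulf_eq0 invr_eq0 (negbTE y0) orbF => /eqP.
Qed.

Lemma proj_eqoo x y : proj x y = None -> y = 0.
Proof. by rewrite /proj; case: (eqVneq y 0). Qed.

Lemma proj_eq_cross x y x' y' : nonzero2 x y -> nonzero2 x' y' ->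
  (proj x y = proj x' y') <-> (x * y' = x' * y).
Proof.
move=> /nonzero2P nz /nonzero2P nz'; rewrite /proj.
case: (eqVneq y 0) => y0; case: (eqVneq y' 0) => y'0.
- by split=> // _; rewrite y0 y'0 !mulr0.
- split=> // /eqP; rewrite y0 mulr0 mulf_eq0 (negbTE y'0) orbF => /eqP x0.
  by case: nz.
- split=> // /esym/eqP; rewrite y'0 mulr0 mulf_eq0 (negbTE y0) orbF => /eqP x'0.
  by case: nz'.
- have cross : x * y' - x' * y = (x / y - x' / y') * (y * y').
    by field; rewrite y0 y'0.
  split=> [[e] | e]; [|congr Some]; apply/eqP; rewrite -subr_eq0.
    by rewrite cross e subrr mul0r.
  rewrite -(mulIr_eq0 _ (mulIf (mulf_neq0 y0 y'0))) -cross.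
  by rewrite e subrr.
Qed.

Lemma homog_proj x y : nonzero2 x y ->
  exists2 c, c != 0 & homog (proj x y) = (c * x, c * y).
Proof.
move=> /nonzero2P nz; rewrite /proj; case: (eqVneq y 0) => y0 /=.
  have x0 : x != 0 by apply/eqP => x0; apply: nz.
  by exists x^-1; rewrite ?invr_eq0 // mulVf // y0 mulr0.
by exists y^-1; rewrite ?invr_eq0 // mulVf // mulrC.
Qed.

Definition qform (c0 c1 c2 x y : F) := c2 * x ^+ 2 + c1 * x * y + c0 * y ^+ 2.

Lemma ratmap2_proj a0 a1 a2 b0 b1 b2 x y : nonzero2 x y ->
  ratmap2 a0 a1 a2 b0 b1 b2 (proj x y) =
  proj (qform a0 a1 a2 x y) (qform b0 b1 b2 x y).
Proof.
move=> nz; rewrite /ratmap2; have [c c0 ->] := homog_proj nz.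
by rewrite -[RHS](@proj_scale (c ^+ 2)) ?expf_neq0 //; congr proj; rewrite /qform; ring.
Qed.

Lemma ratmap2_scale (c a0 a1 a2 b0 b1 b2 : F) : c != 0 ->
  ratmap2 (c * a0) (c * a1) (c * a2) (c * b0) (c * b1) (c * b2) =1
  ratmap2 a0 a1 a2 b0 b1 b2.
Proof.
move=> c0; apply: sphere_proj_ind => x y nz; rewrite !ratmap2_proj //.
by rewrite -[RHS](@proj_scale c) //; congr proj; rewrite /qform; ring.
Qed.

Lemma mobius_proj p q r s x y : nonzero2 x y ->
  mobius p q r s (proj x y) = proj (p * x + q * y) (r * x + s * y).
Proof.
move=> nz; rewrite /mobius; have [c c0 ->] := homog_proj nz.
by rewrite -[RHS](@proj_scale c) //; congr proj; ring.
Qed.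

Lemma lin_nonzero2 p q r s x y : p * s - q * r != 0 -> nonzero2 x y ->
  nonzero2 (p * x + q * y) (r * x + s * y).
Proof.
move=> det0 /nonzero2P nz; apply/nonzero2P => -[e1 e2]; apply: nz.
split; apply/eqP; rewrite -(mulIr_eq0 _ (mulIf det0)); apply/eqP.
  by apply: (eq_lincomb3 (k1 := s) (k2 := - q) (k3 := 0) e1 e2 e2); ring.
by apply: (eq_lincomb3 (k1 := - r) (k2 := p) (k3 := 0) e1 e2 e2); ring.
Qed.

Lemma mobius_comp p q r s p' q' r' s' z : p * s - q * r != 0 ->
  mobius p' q' r' s' (mobius p q r s z) =
  mobius (p' * p + q' * r) (p' * q + q' * s) (r' * p + s' * r) (r' * q + s' * s) z.
Proof.
move=> det0; move: z; apply: sphere_proj_ind => x y nz.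
by rewrite !mobius_proj ?lin_nonzero2 //; congr proj; ring.
Qed.

Lemma mobius1 z : mobius 1 0 0 1 z = z.
Proof.
by move: z; apply: sphere_proj_ind => x y nz; rewrite mobius_proj //; congr proj; ring.
Qed.

Lemma mobius_adjK p q r s : p * s - q * r != 0 ->
  cancel (mobius p q r s) (mobius s (- q) (- r) p).
Proof.
move=> det0; apply: sphere_proj_ind => x y nz.
rewrite !mobius_proj ?lin_nonzero2 // -[RHS](@proj_scale (p * s - q * r)) //.
by congr proj; ring.
Qed.

Lemma mobius_adjVK p q r s : p * s - q * r != 0 ->
  cancel (mobius s (- q) (- r) p) (mobius p q r s).
Proof.
move=> det0; have det0' : s * p - (- q) * (- r) != 0 by rewrite mulrNN mulrC.
by have := mobius_adjK det0'; rewrite !opprK.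
Qed.

Definition conj_by p q r s (f g : sphere F -> sphere F) :=
  forall z, mobius p q r s (f z) = g (mobius p q r s z).

Lemma conj_by_comp p q r s p' q' r' s' f g h : p * s - q * r != 0 ->
  conj_by p q r s f g -> conj_by p' q' r' s' g h ->
  conj_by (p' * p + q' * r) (p' * q + q' * s) (r' * p + s' * r) (r' * q + s' * s) f h.
Proof. by move=> det0 fg gh z; rewrite -!mobius_comp // fg gh. Qed.

Lemma conj_by_adj p q r s f g : p * s - q * r != 0 ->
  conj_by p q r s f g -> conj_by s (- q) (- r) p g f.
Proof.
move=> det0 fg z; rewrite -{1}(mobius_adjVK det0 z) -fg.
by rewrite mobius_adjK.
Qed.

Lemma mob_conj_refl f : mob_conj f f.
Proof.
exists 1, 0, 0, 1; split=> [|z]; last by rewrite !mobius1.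
by rewrite mulr1 mulr0 subr0 oner_eq0.
Qed.

Lemma mob_conj_sym f g : mob_conj f g -> mob_conj g f.
Proof.
case=> [p [q [r [s [det0 fg]]]]]; exists s, (- q), (- r), p.
by split; [rewrite mulrNN mulrC | exact: conj_by_adj].
Qed.

Lemma mob_conj_trans f g h : mob_conj f g -> mob_conj g h -> mob_conj f h.
Proof.
case=> [p [q [r [s [det0 fg]]]]] [p' [q' [r' [s' [det0' gh]]]]].
eexists _, _, _, _; split; last exact: conj_by_comp fg gh.
set D := _ - _; have -> : D = (p' * s' - q' * r') * (p * s - q * r) by rewrite /D; ring.
by rewrite mulf_neq0.
Qed.

End ProjectiveLine.

Arguments nonzero2_10 {F}.
Arguments nonzero2_01 {F}.
Arguments nonzero2_11 {F}.
Arguments proj01 {F}.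
Arguments proj10 {F}.

Section NormalForm.
Variable F : fieldType.
Implicit Types (x y p q r s al be ga de : F).

(* The three hypotheses say that (a X + b)(c' X + d') = (a' X + b')(c X + d)
   as polynomials, i.e. that the two Moebius maps coincide. *)
Lemma proportional_of_cross (a b c d a' b' c' d' : F) :
  a * c' = a' * c -> b * d' = b' * d -> a * d' + b * c' = a' * d + b' * c ->
  a * d - b * c != 0 ->
  exists l, [/\ a' = l * a, b' = l * b, c' = l * c & d' = l * d].
Proof.
move=> e1 e2 e3 det0; exists ((a * d' - c * b') / (a * d - b * c)).
have solve t u v : t * (a * d - b * c) = (a * d' - c * b') * u -> v = u ->
    t = (a * d' - c * b') / (a * d - b * c) * v.
  by move=> tu ->; apply: (mulIf det0); rewrite tu; field.
split; apply: solve => //.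
- by apply: (eq_lincomb3 (k1 := b) (k2 := 0) (k3 := - a) e1 e2 e3); ring.
- by apply: (eq_lincomb3 (k1 := 0) (k2 := - a) (k3 := 0) e1 e2 e3); ring.
- by apply: (eq_lincomb3 (k1 := d) (k2 := 0) (k3 := - c) e1 e2 e3); ring.
- by apply: (eq_lincomb3 (k1 := 0) (k2 := - c) (k3 := 0) e1 e2 e3); ring.
Qed.

Definition no_common_zero (a0 a1 a2 b0 b1 b2 : F) :=
  forall x y, nonzero2 x y -> ~ (qform a0 a1 a2 x y = 0 /\ qform b0 b1 b2 x y = 0).

Lemma no_common_zero_nonzero2 a0 a1 a2 b0 b1 b2 x y :
  no_common_zero a0 a1 a2 b0 b1 b2 -> nonzero2 x y ->
  nonzero2 (qform a0 a1 a2 x y) (qform b0 b1 b2 x y).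
Proof. by move=> ncz nz; apply/nonzero2P; exact: ncz. Qed.

Lemma nf_no_common_zero al be ga de : al * de - be * ga != 0 ->
  no_common_zero be 0 al de 0 ga.
Proof.
move=> det0 x y /nonzero2P nz [e1 e2]; apply: nz.
split; apply/eqP; rewrite -sqrf_eq0 -(mulIr_eq0 _ (mulIf det0)); apply/eqP.
  by apply: (eq_lincomb3 (k1 := de) (k2 := - be) (k3 := 0) e1 e2 e2); rewrite /qform; ring.
by apply: (eq_lincomb3 (k1 := - ga) (k2 := al) (k3 := 0) e1 e2 e2); rewrite /qform; ring.
Qed.

Lemma conj_by_cross a0 a1 a2 b0 b1 b2 c0 c1 c2 d0 d1 d2 p q r s x y :
  no_common_zero a0 a1 a2 b0 b1 b2 -> no_common_zero c0 c1 c2 d0 d1 d2 ->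
  p * s - q * r != 0 ->
  conj_by p q r s (ratmap2 a0 a1 a2 b0 b1 b2) (ratmap2 c0 c1 c2 d0 d1 d2) ->
  nonzero2 x y ->
  (p * qform a0 a1 a2 x y + q * qform b0 b1 b2 x y) *
     qform d0 d1 d2 (p * x + q * y) (r * x + s * y) =
  qform c0 c1 c2 (p * x + q * y) (r * x + s * y) *
     (r * qform a0 a1 a2 x y + s * qform b0 b1 b2 x y).
Proof.
move=> ncz ncz' det0 fg nz; move: (fg (proj x y)).
have fnz := no_common_zero_nonzero2 ncz nz; have Mnz := lin_nonzero2 det0 nz.
rewrite ratmap2_proj // !mobius_proj // ratmap2_proj //.
by move/proj_eq_cross; apply; [exact: lin_nonzero2 | exact: no_common_zero_nonzero2].
Qed.

(* For a map of degree 2 the critical points are exactly the points that are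
   the only preimage of their image. *)
Definition crit_pt (f : sphere F -> sphere F) w := forall v, f v = f w -> v = w.

Lemma conj_by_crit p q r s f g w : p * s - q * r != 0 ->
  conj_by p q r s f g -> crit_pt f w -> crit_pt g (mobius p q r s w).
Proof.
move=> det0 fg crit v; rewrite -(mobius_adjVK det0 v) -!fg.
move/(congr1 (mobius s (- q) (- r) p)).
by rewrite !mobius_adjK // => /crit ->.
Qed.

Lemma nf_crit0 al be ga de : al * de - be * ga != 0 ->
  crit_pt (normal_form al be ga de) (Some 0).
Proof.
move=> det0; have ncz := nf_no_common_zero det0.
apply: sphere_proj_ind => x y nz; rewrite -proj01 /normal_form.
rewrite !ratmap2_proj ?nonzero2_01 // => /proj_eq_cross.
move/(_ (no_common_zero_nonzero2 ncz nz) (no_common_zero_nonzero2 ncz nonzero2_01)) => e.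
apply/proj_eq_cross => //; first exact: nonzero2_01.
suff -> : x = 0 by rewrite !mul0r.
apply/eqP; rewrite -sqrf_eq0 -(mulIr_eq0 _ (mulIf det0)); apply/eqP.
by apply: (eq_lincomb1 (k1 := 1) e); rewrite /qform; ring.
Qed.

Lemma nf_critoo al be ga de : al * de - be * ga != 0 ->
  crit_pt (normal_form al be ga de) None.
Proof.
move=> det0; have ncz := nf_no_common_zero det0.
apply: sphere_proj_ind => x y nz; rewrite -proj10 /normal_form.
rewrite !ratmap2_proj ?nonzero2_10 // => /proj_eq_cross.
move/(_ (no_common_zero_nonzero2 ncz nz) (no_common_zero_nonzero2 ncz nonzero2_10)) => e.
apply/proj_eq_cross => //; first exact: nonzero2_10.
suff -> : y = 0 by rewrite !mulr0.
apply/eqP; rewrite -sqrf_eq0 -(mulIr_eq0 _ (mulIf det0)); apply/eqP.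
by apply: (eq_lincomb1 (k1 := - 1) e); rewrite /qform; ring.
Qed.

Lemma nf_critP al be ga de w : (2 : F) != 0 ->
  crit_pt (normal_form al be ga de) w -> w = Some 0 \/ w = None.
Proof.
case: w => [z|] two0 crit; [left | by right].
have [] : Some (- z) = Some z.
  by apply: crit; rewrite /normal_form /ratmap2 /=; congr proj; ring.
move/(congr1 (+%R z)); rewrite subrr => /esym zz0; congr Some; apply/eqP.
by rewrite -(mulrI_eq0 _ (mulfI two0)) mulr_natl mulr2n zz0.
Qed.

Lemma mobius0 p q r s : mobius p q r s (Some 0) = proj q s.
Proof. by rewrite -proj01 mobius_proj ?nonzero2_01 //; congr proj; ring. Qed.

Lemma mobiusoo p q r s : mobius p q r s None = proj p r.
Proof. by rewrite -proj10 mobius_proj ?nonzero2_10 //; congr proj; ring. Qed.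

(* The conjugacy maps the critical points {0, oo} onto {0, oo}. *)
Lemma nf_conj_by_diag_or_antidiag al be ga de al' be' ga' de' p q r s :
  (2 : F) != 0 -> al * de - be * ga != 0 -> al' * de' - be' * ga' != 0 ->
  p * s - q * r != 0 ->
  conj_by p q r s (normal_form al be ga de) (normal_form al' be' ga' de') ->
  (q = 0 /\ r = 0) \/ (p = 0 /\ s = 0).
Proof.
move=> two0 det0 det0' detM fg.
have := conj_by_crit detM fg (nf_crit0 det0); rewrite mobius0 => /(nf_critP two0).
have := conj_by_crit detM fg (nf_critoo det0); rewrite mobiusoo => /(nf_critP two0).
have det_eq0 : p * s - q * r = 0 -> False by move=> e; rewrite e eqxx in detM.
case=> [/proj_eq0[p0 _] | /proj_eqoo r0] [/proj_eq0[q0 _] | /proj_eqoo s0].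
- by case: det_eq0; rewrite p0 q0 !mul0r subrr.
- by right.
- by left.
- by case: det_eq0; rewrite r0 s0 !mulr0 subrr.
Qed.

Lemma nf_swap_conj_by al be ga de : al * de - be * ga != 0 ->
  conj_by 0 1 1 0 (normal_form al be ga de) (normal_form de ga be al).
Proof.
move=> det0; apply: sphere_proj_ind => x y nz; rewrite /normal_form.
have fnz := no_common_zero_nonzero2 (nf_no_common_zero det0) nz.
have detS : 0 * 0 - 1 * 1 != 0 :> F by rewrite mul0r mul1r sub0r oppr_eq0 oner_eq0.
rewrite ratmap2_proj // !mobius_proj // ratmap2_proj ?lin_nonzero2 //.
by congr proj; rewrite /qform; ring.
Qed.

(* Diagonal conjugacy between normal forms: z |-> (p / s) z, with the
   normalisation of the coefficients changed by the factor [l]. *)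
Definition nf_scaling p s l al be ga de al' be' ga' de' :=
  [/\ al' * p ^+ 2 = l * (p * al), be' * s ^+ 2 = l * (p * be),
      ga' * p ^+ 2 = l * (s * ga) & de' * s ^+ 2 = l * (s * de)].

Lemma nf_diag_conj_by_scaling al be ga de al' be' ga' de' p s :
  al * de - be * ga != 0 -> al' * de' - be' * ga' != 0 -> p * s != 0 ->
  conj_by p 0 0 s (normal_form al be ga de) (normal_form al' be' ga' de') ->
  exists l, nf_scaling p s l al be ga de al' be' ga' de'.
Proof.
move=> det0 det0' ps0 fg.
have detM : p * s - 0 * 0 != 0 by rewrite mulr0 subr0.
have cross x y := conj_by_cross (x := x) (y := y)
  (nf_no_common_zero det0) (nf_no_common_zero det0') detM fg.
have e10 := cross _ _ nonzero2_10; have e01 := cross _ _ nonzero2_01.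
have e11 := cross _ _ nonzero2_11.
apply: (@proportional_of_cross (p * al) (p * be) (s * ga) (s * de)).
- by apply: (eq_lincomb1 (k1 := 1) e10); rewrite /qform; ring.
- by apply: (eq_lincomb1 (k1 := 1) e01); rewrite /qform; ring.
- by apply: (eq_lincomb3 (k1 := 1) (k2 := - 1) (k3 := - 1) e11 e10 e01); rewrite /qform; ring.
- have -> : p * al * (s * de) - p * be * (s * ga) = p * s * (al * de - be * ga) by ring.
  by rewrite mulf_neq0.
Qed.

Lemma nf_scaling_mob_conj al be ga de al' be' ga' de' p s l :
  al * de - be * ga != 0 -> p * s != 0 -> l != 0 ->
  nf_scaling p s l al be ga de al' be' ga' de' ->
  mob_conj (normal_form al be ga de) (normal_form al' be' ga' de').
Proof.
move=> det0 ps0 l0 [e1 e2 e3 e4].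
have detM : p * s - 0 * 0 != 0 by rewrite mulr0 subr0.
exists p, 0, 0, s; split => //; apply: sphere_proj_ind => x y nz.
have fnz := no_common_zero_nonzero2 (nf_no_common_zero det0) nz.
rewrite /normal_form ratmap2_proj // !mobius_proj // ratmap2_proj ?lin_nonzero2 //.
rewrite -[LHS](@proj_scale _ l) //; congr proj.
  apply: (eq_lincomb3 (k1 := - x ^+ 2) (k2 := - y ^+ 2) (k3 := 0) e1 e2 e2).
  by rewrite /qform; ring.
apply: (eq_lincomb3 (k1 := - x ^+ 2) (k2 := - y ^+ 2) (k3 := 0) e3 e4 e4).
by rewrite /qform; ring.
Qed.

Lemma nf_scaling_ABC al be ga de al' be' ga' de' p s l :
  al * de - be * ga = 1 -> al' * de' - be' * ga' = 1 -> p * s != 0 ->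
  nf_scaling p s l al be ga de al' be' ga' de' ->
  [/\ al' * de' = al * de, al' ^+ 3 * be' = al ^+ 3 * be
    & ga' * de' ^+ 3 = ga * de ^+ 3].
Proof.
move=> det1 det1' ps0 [e1 e2 e3 e4].
have [p0 s0] : p != 0 /\ s != 0 by apply/andP; rewrite -negb_or -mulf_eq0.
have al'E : al' = l * al / p by apply: (mulIf (expf_neq0 2 p0)); rewrite e1; field.
have be'E : be' = l * p * be / s ^+ 2 by apply: (mulIf (expf_neq0 2 s0)); rewrite e2; field.
have ga'E : ga' = l * s * ga / p ^+ 2 by apply: (mulIf (expf_neq0 2 p0)); rewrite e3; field.
have de'E : de' = l * de / s by apply: (mulIf (expf_neq0 2 s0)); rewrite e4; field.
have l2 : l ^+ 2 = p * s.
  have : al' * de' - be' * ga' = l ^+ 2 * (al * de - be * ga) / (p * s).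
    by rewrite al'E be'E ga'E de'E; field; rewrite p0 s0.
  by rewrite det1 det1' mulr1 => /esym/(canRL (divfK ps0)); rewrite mul1r.
have ps20 : (p * s) ^+ 2 != 0 by rewrite expf_neq0.
split.
- rewrite al'E de'E.
  have -> : l * al / p * (l * de / s) = l ^+ 2 * (al * de) / (p * s) by field; rewrite p0 s0.
  by rewrite l2 mulrC mulKf.
- rewrite al'E be'E.
  have -> : (l * al / p) ^+ 3 * (l * p * be / s ^+ 2) =
            (l ^+ 2) ^+ 2 * (al ^+ 3 * be) / (p * s) ^+ 2 by field; rewrite p0 s0.
  by rewrite l2 mulrC mulKf.
- rewrite ga'E de'E.
  have -> : l * s * ga / p ^+ 2 * (l * de / s) ^+ 3 =
            (l ^+ 2) ^+ 2 * (ga * de ^+ 3) / (p * s) ^+ 2 by field; rewrite p0 s0.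
  by rewrite l2 mulrC mulKf.
Qed.

(* The marking of the critical points is unique up to their order, which is
   why only [A] and [B + C] (and not [B], [C]) are conjugacy invariants. *)
Lemma nf_conj_ASigma al be ga de al' be' ga' de' :
  (2 : F) != 0 -> al * de - be * ga = 1 -> al' * de' - be' * ga' = 1 ->
  mob_conj (normal_form al be ga de) (normal_form al' be' ga' de') ->
  al' * de' = al * de /\
  al' ^+ 3 * be' + ga' * de' ^+ 3 = al ^+ 3 * be + ga * de ^+ 3.
Proof.
move=> two0 det1 det1' [p [q [r [s [detM fg]]]]].
have det0 : al * de - be * ga != 0 by rewrite det1 oner_eq0.
have det0' : al' * de' - be' * ga' != 0 by rewrite det1' oner_eq0.
have diag_ABC al1 be1 ga1 de1 p1 s1 : al1 * de1 - be1 * ga1 = 1 -> p1 * s1 != 0 ->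
    conj_by p1 0 0 s1 (normal_form al1 be1 ga1 de1) (normal_form al' be' ga' de') ->
    [/\ al' * de' = al1 * de1, al' ^+ 3 * be' = al1 ^+ 3 * be1
      & ga' * de' ^+ 3 = ga1 * de1 ^+ 3].
  move=> det1'' ps0 fg1; have det0'' : al1 * de1 - be1 * ga1 != 0 by rewrite det1'' oner_eq0.
  have [l] := nf_diag_conj_by_scaling det0'' det0' ps0 fg1.
  exact: nf_scaling_ABC.
case: (nf_conj_by_diag_or_antidiag two0 det0 det0' detM fg) => [[q0 r0] | [p0 s0]].
  subst q r; have ps0 : p * s != 0 by move: detM; rewrite !mulr0 subr0.
  by have [-> -> ->] := diag_ABC _ _ _ _ _ _ det1 ps0 fg.
subst p s; have qr0 : q * r != 0 by move: detM; rewrite !mul0r sub0r oppr_eq0.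
have detS : 0 * 0 - 1 * 1 != 0 :> F by rewrite mul0r mul1r sub0r oppr_eq0 oner_eq0.
have det1S : de * al - ga * be = 1 by rewrite -det1; ring.
have det0S : de * al - ga * be != 0 by rewrite det1S oner_eq0.
have := conj_by_comp detS (nf_swap_conj_by det0S) fg.
rewrite !(mul0r, mulr0, mul1r, mulr1, add0r, addr0) => fg'.
have [eA eB eC] := diag_ABC _ _ _ _ _ _ det1S qr0 fg'.
by rewrite eA eB eC mulrC; split => //; ring.
Qed.

Lemma nf_swap_mob_conj al be ga de : al * de - be * ga != 0 ->
  mob_conj (normal_form al be ga de) (normal_form de ga be al).
Proof.
move=> det0; exists 0, 1, 1, 0; split; last exact: nf_swap_conj_by.
by rewrite mul0r mul1r sub0r oppr_eq0 oner_eq0.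
Qed.

Lemma nf_ABC_conj_lead al be ga de al' be' ga' de' : al != 0 ->
  al * de - be * ga = 1 -> al' * de' - be' * ga' = 1 ->
  al * de = al' * de' -> al ^+ 3 * be = al' ^+ 3 * be' ->
  ga * de ^+ 3 = ga' * de' ^+ 3 ->
  mob_conj (normal_form al be ga de) (normal_form al' be' ga' de').
Proof.
move=> al0 det1 det1' eA eB eC.
have det0 : al * de - be * ga != 0 by rewrite det1 oner_eq0.
have al'0 : al' != 0.
  apply/eqP => al'0; move: eB; rewrite al'0 expr0n mul0r => /eqP.
  rewrite mulf_eq0 expf_eq0 (negbTE al0) /= => /eqP be0.
  by move: det1; rewrite be0 mul0r subr0 eA al'0 mul0r => /eqP; rewrite eq_sym oner_eq0.
have ga'E : ga' * al ^+ 3 = ga * al' ^+ 3.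
  have [de'0 | de'0] := eqVneq de' 0.
    have de0 : de = 0 by move/eqP: eA; rewrite de'0 mulr0 mulf_eq0 (negbTE al0) => /eqP.
    have bg : be * ga = -1 by rewrite -det1 de0 mulr0 sub0r opprK.
    have bg' : be' * ga' = -1 by rewrite -det1' de'0 mulr0 sub0r opprK.
    have [be0 be'0] : be != 0 /\ be' != 0.
      by split; apply/eqP => e; [move: bg | move: bg']; rewrite e mul0r => /eqP;
        rewrite eq_sym oppr_eq0 oner_eq0.
    apply: (mulIf (mulf_neq0 be0 be'0)).
    apply: (eq_lincomb3 (k1 := -1) (k2 := - al' ^+ 3 * be') (k3 := al ^+ 3 * be) eB bg bg').
    by ring.
  apply: (mulIf (expf_neq0 3 de'0)).
  apply: (eq_lincomb3 (k1 := 0) (k2 := - al ^+ 3)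
    (k3 := ga * (al ^+ 2 * de ^+ 2 + al * de * al' * de' + al' ^+ 2 * de' ^+ 2)) eB eC eA).
  ring.
have be'E : be' = al ^+ 3 * be / al' ^+ 3.
  by apply: (mulIf (expf_neq0 3 al'0)); rewrite [LHS]mulrC -eB; field.
have de'E : de' = al * de / al' by apply: (mulIf al'0); rewrite [LHS]mulrC -eA; field.
have {}ga'E : ga' = ga * al' ^+ 3 / al ^+ 3.
  by apply: (mulIf (expf_neq0 3 al0)); rewrite ga'E; field.
apply: (@nf_scaling_mob_conj _ _ _ _ _ _ _ _ (al ^+ 2 / al' ^+ 2) 1 (al / al')) => //.
- by rewrite mulr1 mulf_neq0 ?invr_eq0 ?expf_neq0.
- by rewrite mulf_neq0 ?invr_eq0.
by split; rewrite ?be'E ?ga'E ?de'E; field; rewrite ?al0 ?al'0.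
Qed.
End NormalForm.

Section ClosedField.
Variable C : numClosedFieldType.
Implicit Types (x y p q r s al be ga de : C).

Lemma two_neq0 : (2 : C) != 0. Proof. by rewrite pnatr_eq0. Qed.

Lemma neq0_of_mul_eqN1 x y : x * y = -1 -> x != 0 /\ y != 0.
Proof.
by move=> xy; split; apply/eqP => e; move: xy; rewrite e ?mul0r ?mulr0 => /eqP;
  rewrite eq_sym oppr_eq0 oner_eq0.
Qed.

Lemma nf_conj_degenerate be ga be' ga' : be * ga = -1 -> be' * ga' = -1 ->
  mob_conj (normal_form 0 be ga 0) (normal_form 0 be' ga' 0).
Proof.
move=> bg bg'; have [_ ga0] := neq0_of_mul_eqN1 bg; have [_ ga'0] := neq0_of_mul_eqN1 bg'.
have beE : be = -1 / ga by apply: (mulIf ga0); rewrite bg; field.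
have be'E : be' = -1 / ga' by apply: (mulIf ga'0); rewrite bg'; field.
set p := 3.-root (ga ^+ 2 / ga' ^+ 2).
have p3 : p ^+ 3 = ga ^+ 2 / ga' ^+ 2 by rewrite rootCK.
have p0 : p != 0.
  by apply: contra_eq_neq p3 => ->; rewrite expr0n eq_sym mulf_neq0 ?invr_eq0 ?expf_neq0.
apply: (@nf_scaling_mob_conj _ _ _ _ _ _ _ _ _ p 1 (ga' * p ^+ 2 / ga)).
- by rewrite mul0r sub0r bg opprK oner_eq0.
- by rewrite mulr1.
- by rewrite mulf_neq0 ?invr_eq0 ?mulf_neq0 ?expf_neq0.
split; rewrite ?(mul0r, mulr0) //; last by field.
rewrite beE be'E.
have -> : ga' * p ^+ 2 / ga * (p * (-1 / ga)) = - p ^+ 3 * ga' / ga ^+ 2 by field.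
by rewrite p3; field; rewrite ga0 ga'0.
Qed.

Lemma nf_ABC_conj al be ga de al' be' ga' de' :
  al * de - be * ga = 1 -> al' * de' - be' * ga' = 1 ->
  al * de = al' * de' -> al ^+ 3 * be = al' ^+ 3 * be' ->
  ga * de ^+ 3 = ga' * de' ^+ 3 ->
  mob_conj (normal_form al be ga de) (normal_form al' be' ga' de').
Proof.
move=> det1 det1' eA eB eC.
have [al0 | al0] := eqVneq al 0; last exact: nf_ABC_conj_lead.
have [de0 | de0] := eqVneq de 0.
  move: det1' eA eB eC; rewrite al0 de0 !(mul0r, mulr0, expr0n) /=.
  have bg : be * ga = -1 by rewrite -det1 al0 mul0r sub0r opprK.
  move=> det1' eA eB eC.
  have bg' : be' * ga' = -1 by rewrite -det1' -eA sub0r opprK.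
  have [be'0 ga'0] := neq0_of_mul_eqN1 bg'.
  move/esym/eqP: eB; rewrite mulf_eq0 (negbTE be'0) orbF expf_eq0 /= => /eqP ->.
  move/esym/eqP: eC; rewrite mulf_eq0 (negbTE ga'0) expf_eq0 /= => /eqP ->.
  exact: nf_conj_degenerate.
have det0 : al * de - be * ga != 0 by rewrite det1 oner_eq0.
have det0' : al' * de' - be' * ga' != 0 by rewrite det1' oner_eq0.
apply: mob_conj_trans (nf_swap_mob_conj det0) _.
apply: mob_conj_trans (mob_conj_sym (nf_swap_mob_conj det0')).
apply: nf_ABC_conj_lead de0 _ _ _ _ _.
- by rewrite -det1; ring.
- by rewrite -det1'; ring.
- by rewrite mulrC eA mulrC.
- by rewrite mulrC eC mulrC.
- by rewrite mulrC eB mulrC.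
Qed.

(* [B] and [C] are the roots of [X^2 - Sigma X + A^3 (A - 1)], so they are
   determined by [(A, Sigma)] up to order, i.e. up to swapping 0 and oo. *)
Lemma nf_ASigma_conj al be ga de al' be' ga' de' :
  al * de - be * ga = 1 -> al' * de' - be' * ga' = 1 ->
  al * de = al' * de' ->
  al ^+ 3 * be + ga * de ^+ 3 = al' ^+ 3 * be' + ga' * de' ^+ 3 ->
  mob_conj (normal_form al be ga de) (normal_form al' be' ga' de').
Proof.
move=> det1 det1' eA eS.
have BC : (al ^+ 3 * be) * (ga * de ^+ 3) = (al * de) ^+ 3 * (al * de - 1).
  by apply: (eq_lincomb1 (k1 := - (al * de) ^+ 3) det1); ring.
have BC' : (al' ^+ 3 * be') * (ga' * de' ^+ 3) = (al * de) ^+ 3 * (al * de - 1).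
  by rewrite eA; apply: (eq_lincomb1 (k1 := - (al' * de') ^+ 3) det1'); ring.
have : (al' ^+ 3 * be' - al ^+ 3 * be) * (al' ^+ 3 * be' - ga * de ^+ 3) == 0.
  apply/eqP; apply: (eq_lincomb3 (k1 := - al' ^+ 3 * be') (k2 := -1) (k3 := 1) eS BC' BC).
  ring.
rewrite mulf_eq0 !subr_eq0 => /orP[/eqP eB | /eqP eB].
  by apply: nf_ABC_conj => //; apply: (eq_lincomb1 (k1 := 1) eS); rewrite eB; ring.
have det0 : al * de - be * ga != 0 by rewrite det1 oner_eq0.
apply: mob_conj_trans (nf_swap_mob_conj det0) _.
apply: nf_ABC_conj => //.
- by rewrite -det1; ring.
- by rewrite -eA mulrC.
- by rewrite eB; ring.
- by apply: (eq_lincomb1 (k1 := 1) eS); rewrite eB; ring.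
Qed.

Lemma qform_factor (c0 c1 c2 : C) : exists u1 v1 u2 v2 : C,
  [/\ c2 = u1 * u2, c1 = u1 * v2 + u2 * v1 & c0 = v1 * v2].
Proof.
have [c20 | c20] := eqVneq c2 0.
  by exists 0, 1, c1, c0; split; rewrite ?c20; ring.
set d := sqrtC (c1 ^+ 2 - 4 * c2 * c0).
have d2 : d ^+ 2 = c1 ^+ 2 - 4 * c2 * c0 by rewrite sqrtCK.
have two0 := two_neq0.
exists 1, ((c1 - d) / (2 * c2)), c2, ((c1 + d) / 2); split; [ring | by field |].
apply: (mulIf (mulf_neq0 (mulf_neq0 two0 two0) c20)).
have -> : (c1 - d) / (2 * c2) * ((c1 + d) / 2) * (2 * 2 * c2) = c1 ^+ 2 - d ^+ 2 by field.
by apply: (eq_lincomb1 (k1 := 1) d2); ring.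
Qed.

Lemma qform_root (c0 c1 c2 : C) : exists x y, nonzero2 x y /\ qform c0 c1 c2 x y = 0.
Proof.
have [u1 [v1 [u2 [v2 [e2 e1 e0]]]]] := qform_factor c0 c1 c2.
have [nz | ] := boolP (nonzero2 v1 (- u1)).
  by exists v1, (- u1); split => //; rewrite /qform e2 e1 e0; ring.
rewrite /nonzero2 negb_or !negbK oppr_eq0 => /andP[/eqP v10 /eqP u10].
by exists 1, 0; split; [exact: nonzero2_10 | rewrite /qform e2 e1 e0 v10 u10; ring].
Qed.

Lemma common_zero_of_factor (a0 a1 a2 b0 b1 b2 s t s' t' : C) :
  a2 = s * s' -> a1 = s * t' + s' * t -> a0 = t * t' ->
  qform b0 b1 b2 t (- s) = 0 -> ~ no_common_zero a0 a1 a2 b0 b1 b2.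
Proof.
move=> e2 e1 e0 bts ncz; have [nz | ] := boolP (nonzero2 t (- s)).
  by apply: (ncz _ _ nz); split => //; rewrite /qform e2 e1 e0; ring.
rewrite /nonzero2 negb_or !negbK oppr_eq0 => /andP[/eqP t0 /eqP s0].
have [x [y [nz bxy]]] := qform_root b0 b1 b2.
by apply: (ncz _ _ nz); split => //; rewrite /qform e2 e1 e0 t0 s0; ring.
Qed.

(* the resultant of the two binary quadratic forms *)
Definition qres (a0 a1 a2 b0 b1 b2 : C) :=
  (a2 * b0 - a0 * b2) ^+ 2 - (a2 * b1 - a1 * b2) * (a1 * b0 - a0 * b1).

Lemma qres_neq0 a0 a1 a2 b0 b1 b2 : no_common_zero a0 a1 a2 b0 b1 b2 ->
  qres a0 a1 a2 b0 b1 b2 != 0.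
Proof.
move=> ncz; have [s1 [t1 [s2 [t2 [e2 e1 e0]]]]] := qform_factor a0 a1 a2.
have -> : qres a0 a1 a2 b0 b1 b2 = qform b0 b1 b2 t1 (- s1) * qform b0 b1 b2 t2 (- s2).
  by rewrite /qres /qform e2 e1 e0; ring.
rewrite mulf_neq0 //; apply/eqP => bts.
  exact: (common_zero_of_factor e2 e1 e0 bts).
by apply: (@common_zero_of_factor _ _ _ _ _ _ s2 t2 s1 t1 _ _ _ bts) ncz;
  rewrite ?e2 ?e1 ?e0; ring.
Qed.

Lemma no_common_zero_middle0 (a0 a1 a2 b0 b1 b2 : C) : no_common_zero a0 a1 a2 b0 b1 b2 ->
  a2 * b1 = a1 * b2 -> a1 * b0 = a0 * b1 -> a1 = 0 /\ b1 = 0.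
Proof.
move=> ncz e1 e2; have [b10 | b10] := eqVneq b1 0.
  split=> //; apply/eqP/negPn/negP => a10; have [x [y [nz axy]]] := qform_root a0 a1 a2.
  apply: (ncz _ _ nz); split => //; apply/eqP; rewrite -(mulIr_eq0 _ (mulIf a10)).
  apply/eqP; apply: (eq_lincomb3 (k1 := - x ^+ 2) (k2 := y ^+ 2) (k3 := b1) e1 e2 axy).
  by rewrite /qform; ring.
have [x [y [nz bxy]]] := qform_root b0 b1 b2.
exfalso; apply: (ncz _ _ nz); split => //; apply/eqP; rewrite -(mulIr_eq0 _ (mulIf b10)).
apply/eqP; apply: (eq_lincomb3 (k1 := x ^+ 2) (k2 := - y ^+ 2) (k3 := a1) e1 e2 bxy).
by rewrite /qform; ring.
Qed.

Section CriticalNormalisation.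
Variables a0 a1 a2 b0 b1 b2 u1 v1 u2 v2 : C.

(* Coefficients of the Jacobian form [P_x Q_y - P_y Q_x] of
   [P = qform a0 a1 a2] and [Q = qform b0 b1 b2]; its zeros are the critical
   points of [ratmap2 a0 a1 a2 b0 b1 b2]. *)
Definition jac2 := 2 * (a2 * b1 - a1 * b2).
Definition jac1 := 4 * (a2 * b0 - a0 * b2).
Definition jac0 := 2 * (a1 * b0 - a0 * b1).

(* With the Jacobian form factored as [(u1 x + v1 y) (u2 x + v2 y)], the
   Moebius map of matrix [[-u2, -v2], [u1, v1]] sends the critical points
   [[v2 : -u2]] and [[v1 : -u1]] to 0 and oo; [crit_det] is its determinant
   and [[[v1, v2], [-u1, -u2]]] its adjugate. *)
Definition crit_det := u1 * v2 - u2 * v1.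

Definition pullP x y := qform a0 a1 a2 (v1 * x + v2 * y) (- u1 * x + - u2 * y).
Definition pullQ x y := qform b0 b1 b2 (v1 * x + v2 * y) (- u1 * x + - u2 * y).
Definition conjP x y := - u2 * pullP x y - v2 * pullQ x y.
Definition conjQ x y := u1 * pullP x y + v1 * pullQ x y.

Definition cP2 := conjP 1 0.
Definition cP0 := conjP 0 1.
Definition cP1 := conjP 1 1 - cP2 - cP0.
Definition cQ2 := conjQ 1 0.
Definition cQ0 := conjQ 0 1.
Definition cQ1 := conjQ 1 1 - cQ2 - cQ0.

Lemma conjP_qform x y : conjP x y = qform cP0 cP1 cP2 x y.
Proof. by rewrite /cP1 /cP0 /cP2 /conjP /pullP /pullQ /qform; ring. Qed.

Lemma conjQ_qform x y : conjQ x y = qform cQ0 cQ1 cQ2 x y.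
Proof. by rewrite /cQ1 /cQ0 /cQ2 /conjQ /pullP /pullQ /qform; ring. Qed.

Lemma conjP_adj x y : conjP (- u2 * x + - v2 * y) (u1 * x + v1 * y) =
  crit_det ^+ 2 * (- u2 * qform a0 a1 a2 x y + - v2 * qform b0 b1 b2 x y).
Proof. by rewrite /conjP /pullP /pullQ /qform /crit_det; ring. Qed.

Lemma conjQ_adj x y : conjQ (- u2 * x + - v2 * y) (u1 * x + v1 * y) =
  crit_det ^+ 2 * (u1 * qform a0 a1 a2 x y + v1 * qform b0 b1 b2 x y).
Proof. by rewrite /conjQ /pullP /pullQ /qform /crit_det; ring. Qed.

Lemma pullP_conj x y : crit_det * pullP x y = v1 * conjP x y + v2 * conjQ x y.
Proof. by rewrite /conjP /conjQ /crit_det; ring. Qed.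

Lemma pullQ_conj x y : crit_det * pullQ x y = - u1 * conjP x y - u2 * conjQ x y.
Proof. by rewrite /conjP /conjQ /crit_det; ring. Qed.

Lemma jac_conj2 : 2 * (cP2 * cQ1 - cP1 * cQ2) = crit_det ^+ 2 * qform jac0 jac1 jac2 v1 (- u1).
Proof.
rewrite /cP1 /cQ1 /cP0 /cP2 /cQ0 /cQ2 /conjP /conjQ /pullP /pullQ /qform.
by rewrite /jac0 /jac1 /jac2 /crit_det; ring.
Qed.

Lemma jac_conj0 : 2 * (cP1 * cQ0 - cP0 * cQ1) = crit_det ^+ 2 * qform jac0 jac1 jac2 v2 (- u2).
Proof.
rewrite /cP1 /cQ1 /cP0 /cP2 /cQ0 /cQ2 /conjP /conjQ /pullP /pullQ /qform.
by rewrite /jac0 /jac1 /jac2 /crit_det; ring.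
Qed.

Hypothesis ncz : no_common_zero a0 a1 a2 b0 b1 b2.
Hypothesis crit_det0 : crit_det != 0.

Lemma conj_no_common_zero : no_common_zero cP0 cP1 cP2 cQ0 cQ1 cQ2.
Proof.
have adj0 : v1 * - u2 - v2 * - u1 != 0 by rewrite (_ : _ - _ = crit_det) // /crit_det; ring.
move=> x y nz; rewrite -conjP_qform -conjQ_qform => -[P0 Q0].
apply: (ncz (lin_nonzero2 adj0 nz)); split; apply: (mulfI crit_det0).
  by rewrite [LHS]pullP_conj P0 Q0; ring.
by rewrite [LHS]pullQ_conj P0 Q0; ring.
Qed.

Lemma conj_by_conj : conj_by (- u2) (- v2) u1 v1
  (ratmap2 a0 a1 a2 b0 b1 b2) (ratmap2 cP0 cP1 cP2 cQ0 cQ1 cQ2).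
Proof.
have detM : - u2 * v1 - - v2 * u1 != 0 by rewrite (_ : _ - _ = crit_det) // /crit_det; ring.
apply: sphere_proj_ind => x y nz.
rewrite ratmap2_proj // mobius_proj ?(no_common_zero_nonzero2 ncz nz) //.
rewrite mobius_proj // ratmap2_proj ?lin_nonzero2 // -conjP_qform -conjQ_qform.
by rewrite conjP_adj conjQ_adj proj_scale // expf_neq0.
Qed.

Hypotheses (jac2E : jac2 = u1 * u2) (jac1E : jac1 = u1 * v2 + u2 * v1)
  (jac0E : jac0 = v1 * v2).

Lemma conj_middle0 : cP1 = 0 /\ cQ1 = 0.
Proof.
apply: no_common_zero_middle0 conj_no_common_zero _ _; apply/eqP; rewrite -subr_eq0;
  apply/eqP; apply: (mulfI two_neq0).
  by rewrite jac_conj2 jac0E jac1E jac2E /qform; ring.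
by rewrite jac_conj0 jac0E jac1E jac2E /qform; ring.
Qed.

Lemma crit_det_neq0 : crit_det != 0.
Proof.
have E : crit_det ^+ 2 = 2 ^+ 4 * qres a0 a1 a2 b0 b1 b2.
  transitivity (jac1 ^+ 2 - 4 * jac2 * jac0).
    by rewrite jac1E jac2E jac0E /crit_det; ring.
  by rewrite /jac1 /jac2 /jac0 /qres; ring.
apply/eqP => d0; move/eqP: E; rewrite d0 expr0n /= eq_sym mulf_eq0 expf_eq0 /=.
by rewrite (negbTE two_neq0) (negbTE (qres_neq0 ncz)).
Qed.

End CriticalNormalisation.

Lemma ratmap2_even_nf (g0 g2 h0 h2 : C) : no_common_zero g0 0 g2 h0 0 h2 ->
  exists al be ga de, al * de - be * ga = 1 /\
    ratmap2 g0 0 g2 h0 0 h2 =1 normal_form al be ga de.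
Proof.
move=> ncz; have D0 : g2 * h0 - g0 * h2 != 0.
  have := qres_neq0 ncz.
  by rewrite (_ : qres _ _ _ _ _ _ = (g2 * h0 - g0 * h2) ^+ 2) ?sqrf_eq0 // /qres; ring.
set c := (sqrtC (g2 * h0 - g0 * h2))^-1.
have c2D : c ^+ 2 * (g2 * h0 - g0 * h2) = 1 by rewrite /c exprVn sqrtCK mulVf.
have c0 : c != 0 by apply: contra_eq_neq c2D => ->; rewrite expr0n mul0r eq_sym oner_neq0.
exists (c * g2), (c * g0), (c * h2), (c * h0); split.
  by apply: (eq_lincomb1 (k1 := 1) c2D); ring.
by move=> z; rewrite /normal_form -[in RHS](mulr0 c) ratmap2_scale.
Qed.

Lemma ratmap2_nf_conj (a0 a1 a2 b0 b1 b2 : C) : no_common_zero a0 a1 a2 b0 b1 b2 ->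
  exists al be ga de, al * de - be * ga = 1 /\
    mob_conj (ratmap2 a0 a1 a2 b0 b1 b2) (normal_form al be ga de).
Proof.
move=> ncz.
have [u1 [v1 [u2 [v2 [jac2E jac1E jac0E]]]]] :=
  qform_factor (jac0 a0 a1 b0 b1) (jac1 a0 a2 b0 b2) (jac2 a1 a2 b1 b2).
have det0 := crit_det_neq0 ncz jac2E jac1E jac0E.
have [P10 Q10] := conj_middle0 ncz det0 jac2E jac1E jac0E.
have := conj_by_conj ncz det0; have := conj_no_common_zero ncz det0.
rewrite P10 Q10 => /ratmap2_even_nf [al [be [ga [de [det1 nfE]]]]] fg.
exists al, be, ga, de; split => //; exists (- u2), (- v2), u1, v1; split.
  by rewrite (_ : _ - _ = crit_det u1 v1 u2 v2) // /crit_det; ring.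
by move=> z; rewrite fg nfE.
Qed.

Lemma Rat2_nf_conj (f : sphere C -> sphere C) : Rat2 f ->
  exists al be ga de, al * de - be * ga = 1 /\ mob_conj f (normal_form al be ga de).
Proof.
case=> [a0 [a1 [a2 [b0 [b1 [b2 [ncz fE]]]]]]].
have ncz' : no_common_zero a0 a1 a2 b0 b1 b2.
  by move=> x y /nonzero2P nz; apply: ncz => -[x0 y0]; apply: nz.
have [al [be [ga [de [det1 [p [q [r [s [detM fg]]]]]]]]]] := ratmap2_nf_conj ncz'.
exists al, be, ga, de; split => //; exists p, q, r, s; split => // z.
by rewrite fE fg.
Qed.

Lemma nf_ASigma_exists a s : exists al be ga de,
  [/\ al * de - be * ga = 1, a = al * de & s = al ^+ 3 * be + ga * de ^+ 3].
Proof.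
have [a0 | a0] := eqVneq a 0.
  have [s0 | s0] := eqVneq s 0.
    by exists 0, 1, (-1), 0; split; rewrite ?a0 ?s0; ring.
  by exists 1, s, (- 1 / s), 0; split; rewrite ?a0; [field | ring | ring].
set d := sqrtC (s ^+ 2 - 4 * (a ^+ 3 * (a - 1))).
have d2 : d ^+ 2 = s ^+ 2 - 4 * (a ^+ 3 * (a - 1)) by rewrite sqrtCK.
exists 1, ((s + d) / 2), ((s - d) / 2 / a ^+ 3), a; split; [| ring | by field].
have -> : 1 * a - (s + d) / 2 * ((s - d) / 2 / a ^+ 3) =
          a - (s ^+ 2 - d ^+ 2) / 4 / a ^+ 3 by field.
by rewrite d2; field.
Qed.
End ClosedField.

Theorem mainTheorem11 (R : rcfType) :
  let C := R[i] in
  (* every class has a value *)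
  (forall f : sphere C -> sphere C, Rat2 f -> exists a s : C, ASigma_of f a s) /\
  (* well defined on conjugacy classes, independent of the marking *)
  (forall (f g : sphere C -> sphere C) (a s a' s' : C),
     Rat2 f -> Rat2 g -> mob_conj f g ->
     ASigma_of f a s -> ASigma_of g a' s' -> a = a' /\ s = s') /\
  (* injective on M_2 *)
  (forall (f g : sphere C -> sphere C) (a s : C),
     Rat2 f -> Rat2 g -> ASigma_of f a s -> ASigma_of g a s -> mob_conj f g) /\
  (* surjective onto C^2 *)
  (forall a s : C, exists f : sphere C -> sphere C, Rat2 f /\ ASigma_of f a s).
Proof.
move=> C; split; [|split; [|split]].
- move=> f /Rat2_nf_conj [al [be [ga [de [det1 fnf]]]]].
  by exists (al * de), (al ^+ 3 * be + ga * de ^+ 3), al, be, ga, de.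
- move=> f g a s a' s' _ _ fg [al [be [ga [de [det1 [fnf [-> ->]]]]]]]
    [al' [be' [ga' [de' [det1' [gnf [-> ->]]]]]]].
  have nfnf := mob_conj_trans (mob_conj_sym fnf) (mob_conj_trans fg gnf).
  by have [-> ->] := nf_conj_ASigma (two_neq0 C) det1 det1' nfnf.
- move=> f g a s _ _ [al [be [ga [de [det1 [fnf [eA eS]]]]]]]
    [al' [be' [ga' [de' [det1' [gnf [eA' eS']]]]]]].
  apply: mob_conj_trans fnf (mob_conj_trans _ (mob_conj_sym gnf)).
  by apply: nf_ASigma_conj; rewrite // -?eA -?eA' -?eS -?eS'.
- move=> a s; have [al [be [ga [de [det1 eA eS]]]]] := nf_ASigma_exists a s.
  have det0 : al * de - be * ga != 0 by rewrite det1 oner_eq0.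
  exists (normal_form al be ga de); split.
    exists be, 0, al, de, 0, ga; split => // x y /nonzero2_pair.
    exact: nf_no_common_zero det0 x y.
  by exists al, be, ga, de; do 2!split => //; apply: mob_conj_refl.
Qed.
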